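(* Let $G$ and $H$ be dicotic nonzugzwang scoring games all of whose terminal positions are numbers. Then for every $t\geq 0$, $Ls((G+H)_t)=Ls(G_t+H_t)$ and $Rs((G+H)_t)=Rs(G_t+H_t)$. Moreover $\sigma(G+H)\leq\max(\sigma(G),\sigma(H))$, and if $\sigma(H)<\sigma(G)$ then $\sigma(G+H)=\sigma(G)$. In particular, $(G+H)_{\sigma(G+H)}=G_{\sigma(G)}+H_{\sigma(H)}$.
   Context: A scoring game is $G=\langle G^L\mid G^R\rangle$ with $G^L,G^R$ finite nonempty sets of scoring games or empty sets decorated with a real, $\emptyset^s$; $\langle\emptyset^s\mid\emptyset^s\rangle$ is the number $s$. $Ls(\langle\emptyset^s\mid G^R\rangle)=s$, $Rs(\langle G^L\mid\emptyset^s\rangle)=s$, otherwise $Ls(G)=\max_{G^l\in G^L}Rs(G^l)$, $Rs(G)=\min_{G^r\in G^R}Ls(G^r)$. Disjunctive sum $G_1+G_2$: Left options are all $G_1^l+G_2$ and $G_1+G_2^l$, and if neither component has a Left option the Left side is $\emptyset^{\ell_1+\ell_2}$ ($\emptyset^{\ell_i}$ the Left side of $G_i$); symmetrically for Right. In particular $H+c$ for a number $c$ adds $c$ to every terminal score. Dicotic: at every position both players have options or neither; nonzugzwang: $Ls(H)\ge Rs(H)$ at every position $H$. Cooling: if $G$ is a number $k$, $G_t=k$ and $\sigma(G)=0$. Otherwise $\widetilde G_t=\langle \{G^l_t-t\}_{G^l\in G^L}\mid \{G^r_t+t\}_{G^r\in G^R}\rangle$, $t_0=\min\{t\ge0: Ls(\widetilde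 G_t)=Rs(\widetilde G_t)\}$ (exists for dicotic nonzugzwang games), $G_t=\widetilde G_t$ for $t\le t_0$ and $G_t$ is the number $Ls(\widetilde G_{t_0})$ for $t>t_0$; $\sigma(G)=t_0$ is the temperature. For $t\geq\sigma(G)$, $G_t$ is a number. *)

From Stdlib Require Import Reals List ClassicalEpsilon.
Open Scope R_scope.

(** Scoring games.  [Gm a GL b GR] represents <GL | GR>, where an empty
    left list GL is read as the left side  ∅^a  and an empty right list
    GR as  ∅^b.  When a list is nonempty its decoration is ignored by all
    definitions below (Ls, Rs, sums, cooling, predicates). *)
Inductive game : Type :=
  Gm : R -> list game -> R -> list game -> game.

Definition num (s : R) : game := Gm s nil s nil.

Fixpoint Ls (G : game) : R :=
  match G with
  | Gm a GL _ _ =>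
      match GL with
      | nil => a
      | g :: gs => fold_right (fun h m => Rmax (Rs h) m) (Rs g) gs
      end
  end
with Rs (G : game) : R :=
  match G with
  | Gm _ _ b GR =>
      match GR with
      | nil => b
      | g :: gs => fold_right (fun h m => Rmin (Ls h) m) (Ls g) gs
      end
  end.

Fixpoint gadd (G H : game) {struct G} : game :=
  match G with
  | Gm a GL b GR =>
      let fix addG (H : game) : game :=
        match H with
        | Gm c HL d HR =>
            Gm (a + c) (map (fun g => gadd g H) GL ++ map addG HL)
               (b + d) (map (fun g => gadd g H) GR ++ map addG HR)
        end in
      addG H
  end.

Definition isnum (G : game) : bool :=
  match G with
  | Gm a nil b nil => if Req_EM_T a b then true else false
  | _ => false
  end.

(** t0 = min { t >= 0 : Ls(f t) = Rs(f t) } (chosen by classical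
    description; when no minimum exists the value is unspecified). *)
Definition is_tmin (f : R -> game) (t0 : R) : Prop :=
  0 <= t0 /\ Ls (f t0) = Rs (f t0) /\
  (forall t, 0 <= t -> Ls (f t) = Rs (f t) -> t0 <= t).

Definition tmin (f : R -> game) : R :=
  epsilon (inhabits 0) (is_tmin f).

Fixpoint cool (G : game) : R -> game :=
  match G with
  | Gm a GL b GR =>
      let tl := fun t =>
        Gm a (map (fun g => gadd (cool g t) (num (- t))) GL)
           b (map (fun g => gadd (cool g t) (num t)) GR) in
      if isnum G then fun _ => G
      else fun t => if Rle_dec t (tmin tl) then tl t
                    else num (Ls (tl (tmin tl)))
  end.

Definition tilde (G : game) (t : R) : game :=
  match G with
  | Gm a GL b GR =>
      Gm a (map (fun g => gadd (cool g t) (num (- t))) GL)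
         b (map (fun g => gadd (cool g t) (num t)) GR)
  end.

Definition temperature (G : game) : R :=
  if isnum G then 0 else tmin (tilde G).

Fixpoint hered (P : game -> Prop) (G : game) : Prop :=
  P G /\
  match G with
  | Gm _ GL _ GR =>
      fold_right (fun g acc => hered P g /\ acc) True GL /\
      fold_right (fun g acc => hered P g /\ acc) True GR
  end.

Definition dicotic_pos (G : game) : Prop :=
  match G with Gm _ GL _ GR => (GL = nil <-> GR = nil) end.

Definition dicotic (G : game) : Prop := hered dicotic_pos G.

Definition nonzugzwang (G : game) : Prop := hered (fun P => Ls P >= Rs P) G.

Definition terminal_numbers (G : game) : Prop :=
  hered (fun P => match P with Gm a GL b GR => GL = nil -> GR = nil -> a = b end) G.

From Stdlib Require Import Reals Lra List ClassicalEpsilon Classical.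
Open Scope R_scope.

(* By induction on positions, the left options of the tilde game ~(G+H)_t are
   the cooled options (G^L+H)_t - t and (G+H^L)_t - t, which have the scores of
   G^L_t + H_t - t and G_t + H^L_t - t.  While both G and H are hot this is
   exactly the option set of G_t + H_t.  Once G has frozen to its mast value g,
   the moves in G are dominated, by the sum bounds
   Rs(A+B) <= Rs A + Ls B <= Ls(A+B) valid for nonzugzwang games, and what
   remains has the scores of g + H_t; symmetrically when H has frozen.  The
   temperature statements follow because the two scores of a cooled game
   approach each other monotonically: those of ~(G+H)_t meet by
   max(sigma(G), sigma(H)), and, when H freezes first, not before sigma(G). *)

Definition left_opts (X : game) : list game := match X with Gm _ L _ _ => L end.
Definition right_opts (X : game) : list game := match X with Gm _ _ _ Rl => Rl end.
Definition left_dec (X : game) : R := match X with Gm a _ _ _ => a end.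
Definition right_dec (X : game) : R := match X with Gm _ _ b _ => b end.

Fixpoint game_ind_opts (P : game -> Prop)
  (step : forall X, (forall g, In g (left_opts X) -> P g) ->
                    (forall g, In g (right_opts X) -> P g) -> P X)
  (X : game) {struct X} : P X :=
  match X with
  | Gm a L b Rl =>
      let fix all (l : list game) : forall g, In g l -> P g :=
        match l with
        | nil => fun g (H : In g nil) => False_ind (P g) H
        | x :: l' => fun g H =>
            match H with
            | or_introl e => eq_ind x P (game_ind_opts P step x) g e
            | or_intror H' => all l' g H'
            end
        end in
      step (Gm a L b Rl) (all L) (all Rl)
  end.

(** * Scores as extrema over options *)

Lemma fold_Rmax_ge {A} (f : A -> R) x l y :
  In y (x :: l) -> f y <= fold_right (fun h m => Rmax (f h) m) (f x) l.
Proof.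
  induction l as [|z l IH]; simpl; intros Hy.
  - destruct Hy as [<-|[]]; lra.
  - destruct Hy as [<-|[<-|Hy]].
    + eapply Rle_trans; [apply IH; left; reflexivity|apply Rmax_r].
    + apply Rmax_l.
    + eapply Rle_trans; [apply IH; right; exact Hy|apply Rmax_r].
Qed.

Lemma fold_Rmax_attained {A} (f : A -> R) x l :
  exists y, In y (x :: l) /\ fold_right (fun h m => Rmax (f h) m) (f x) l = f y.
Proof.
  induction l as [|z l [y [Hy E]]]; simpl.
  - exists x; auto.
  - simpl in E. rewrite E. unfold Rmax. destruct (Rle_dec (f z) (f y)).
    + exists y. split; [destruct Hy; auto|reflexivity].
    + exists z. auto.
Qed.

Lemma fold_Rmin_le {A} (f : A -> R) x l y :
  In y (x :: l) -> fold_right (fun h m => Rmin (f h) m) (f x) l <= f y.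
Proof.
  induction l as [|z l IH]; simpl; intros Hy.
  - destruct Hy as [<-|[]]; lra.
  - destruct Hy as [<-|[<-|Hy]].
    + eapply Rle_trans; [apply Rmin_r|apply IH; left; reflexivity].
    + apply Rmin_l.
    + eapply Rle_trans; [apply Rmin_r|apply IH; right; exact Hy].
Qed.

Lemma fold_Rmin_attained {A} (f : A -> R) x l :
  exists y, In y (x :: l) /\ fold_right (fun h m => Rmin (f h) m) (f x) l = f y.
Proof.
  induction l as [|z l [y [Hy E]]]; simpl.
  - exists x; auto.
  - simpl in E. rewrite E. unfold Rmin. destruct (Rle_dec (f z) (f y)).
    + exists z. auto.
    + exists y. split; [destruct Hy; auto|reflexivity].
Qed.

Lemma list_upper_bound {A} (f : A -> R) (l : list A) :
  exists K, forall x, In x l -> f x <= K.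
Proof.
  induction l as [|y l [K HK]].
  - exists 0. intros x [].
  - exists (Rmax (f y) K). intros x [<-|Hx]; [apply Rmax_l|].
    eapply Rle_trans; [apply HK, Hx|apply Rmax_r].
Qed.

Lemma Ls_no_opts X : left_opts X = nil -> Ls X = left_dec X.
Proof. destruct X as [a L b Rl]; simpl; intros ->; reflexivity. Qed.

Lemma Rs_no_opts X : right_opts X = nil -> Rs X = right_dec X.
Proof. destruct X as [a L b Rl]; simpl; intros ->; destruct L; reflexivity. Qed.

Lemma Ls_ge_opt X y : In y (left_opts X) -> Rs y <= Ls X.
Proof.
  destruct X as [a [|x l] b Rl]; [intros []|].
  intros Hy. exact (fold_Rmax_ge Rs x l y Hy).
Qed.

Lemma Rs_le_opt X y : In y (right_opts X) -> Rs X <= Ls y.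
Proof.
  destruct X as [a L b [|x l]]; [intros []|].
  intros Hy. destruct L; exact (fold_Rmin_le Ls x l y Hy).
Qed.

Lemma Ls_attained X : left_opts X <> nil -> exists y, In y (left_opts X) /\ Ls X = Rs y.
Proof.
  destruct X as [a [|x l] b Rl]; intros HX; [exfalso; apply HX; reflexivity|].
  exact (fold_Rmax_attained Rs x l).
Qed.

Lemma Rs_attained X : right_opts X <> nil -> exists y, In y (right_opts X) /\ Rs X = Ls y.
Proof.
  destruct X as [a L b [|x l]]; intros HX; [exfalso; apply HX; reflexivity|].
  destruct L; exact (fold_Rmin_attained Ls x l).
Qed.

Lemma Ls_le X v :
  (left_opts X = nil -> left_dec X <= v) ->
  (forall y, In y (left_opts X) -> Rs y <= v) -> Ls X <= v.
Proof.
  intros Hnil Hopt. destruct (left_opts X) as [|g l] eqn:E.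
  - rewrite (Ls_no_opts X E). exact (Hnil eq_refl).
  - destruct (Ls_attained X) as (y & Hy & ->); [rewrite E; discriminate|].
    apply Hopt. rewrite <- E. exact Hy.
Qed.

Lemma Rs_ge X v :
  (right_opts X = nil -> v <= right_dec X) ->
  (forall y, In y (right_opts X) -> v <= Ls y) -> v <= Rs X.
Proof.
  intros Hnil Hopt. destruct (right_opts X) as [|g l] eqn:E.
  - rewrite (Rs_no_opts X E). exact (Hnil eq_refl).
  - destruct (Rs_attained X) as (y & Hy & ->); [rewrite E; discriminate|].
    apply Hopt. rewrite <- E. exact Hy.
Qed.

Lemma Ls_dominated X Y d :
  (left_opts X = nil -> left_opts Y = nil /\ left_dec X <= left_dec Y + d) ->
  (forall x, In x (left_opts X) -> exists y, In y (left_opts Y) /\ Rs x <= Rs y + d) ->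
  Ls X <= Ls Y + d.
Proof.
  intros Hnil Hopt. apply Ls_le.
  - intros E. destruct (Hnil E) as [EY Hd]. rewrite (Ls_no_opts Y EY). exact Hd.
  - intros x Hx. destruct (Hopt x Hx) as (y & Hy & Hxy).
    pose proof (Ls_ge_opt Y y Hy). lra.
Qed.

Lemma Rs_dominated X Y d :
  (right_opts X = nil -> right_opts Y = nil /\ right_dec Y <= right_dec X + d) ->
  (forall x, In x (right_opts X) -> exists y, In y (right_opts Y) /\ Ls y <= Ls x + d) ->
  Rs Y <= Rs X + d.
Proof.
  intros Hnil Hopt. cut (Rs Y - d <= Rs X); [lra|]. apply Rs_ge.
  - intros E. destruct (Hnil E) as [EY Hd]. rewrite (Rs_no_opts Y EY). lra.
  - intros x Hx. destruct (Hopt x Hx) as (y & Hy & Hxy).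
    pose proof (Rs_le_opt Y y Hy). lra.
Qed.

Lemma Ls_ext X Y c :
  (left_opts X = nil -> left_opts Y = nil -> left_dec X = left_dec Y + c) ->
  map Rs (left_opts X) = map (fun y => Rs y + c) (left_opts Y) ->
  Ls X = Ls Y + c.
Proof.
  intros Hdec Hmap.
  assert (Hnil : left_opts X = nil <-> left_opts Y = nil).
  { split; intros E; rewrite E in Hmap; simpl in Hmap;
      [symmetry in Hmap|]; exact (map_eq_nil _ _ Hmap). }
  assert (Hval : forall x, In x (left_opts X) ->
            exists y, In y (left_opts Y) /\ Rs x = Rs y + c).
  { intros x Hx. apply (in_map Rs) in Hx. rewrite Hmap, in_map_iff in Hx.
    destruct Hx as (y & E & Hy). eauto. }
  assert (Hval' : forall y, In y (left_opts Y) ->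
            exists x, In x (left_opts X) /\ Rs x = Rs y + c).
  { intros y Hy. apply (in_map (fun y => Rs y + c)) in Hy. rewrite <- Hmap, in_map_iff in Hy.
    destruct Hy as (x & E & Hx). eauto. }
  apply Rle_antisym.
  - apply Ls_dominated.
    + intros E. pose proof E as EY. apply Hnil in EY. split; [exact EY|].
      rewrite (Hdec E EY). lra.
    + intros x Hx. destruct (Hval x Hx) as (y & Hy & E). exists y. split; [exact Hy|lra].
  - cut (Ls Y <= Ls X + - c); [lra|]. apply Ls_dominated.
    + intros E. pose proof E as EX. apply Hnil in EX. split; [exact EX|].
      rewrite (Hdec EX E). lra.
    + intros y Hy. destruct (Hval' y Hy) as (x & Hx & E). exists x. split; [exact Hx|lra].
Qed.

Lemma Rs_ext X Y c :
  (right_opts X = nil -> right_opts Y = nil -> right_dec X = right_dec Y + c) ->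
  map Ls (right_opts X) = map (fun y => Ls y + c) (right_opts Y) ->
  Rs X = Rs Y + c.
Proof.
  intros Hdec Hmap.
  assert (Hnil : right_opts X = nil <-> right_opts Y = nil).
  { split; intros E; rewrite E in Hmap; simpl in Hmap;
      [symmetry in Hmap|]; exact (map_eq_nil _ _ Hmap). }
  assert (Hval : forall x, In x (right_opts X) ->
            exists y, In y (right_opts Y) /\ Ls x = Ls y + c).
  { intros x Hx. apply (in_map Ls) in Hx. rewrite Hmap, in_map_iff in Hx.
    destruct Hx as (y & E & Hy). eauto. }
  assert (Hval' : forall y, In y (right_opts Y) ->
            exists x, In x (right_opts X) /\ Ls x = Ls y + c).
  { intros y Hy. apply (in_map (fun y => Ls y + c)) in Hy. rewrite <- Hmap, in_map_iff in Hy.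
    destruct Hy as (x & E & Hx). eauto. }
  apply Rle_antisym.
  - cut (Rs X <= Rs Y + c); [lra|]. apply Rs_dominated.
    + intros E. pose proof E as EX. apply Hnil in EX. split; [exact EX|].
      rewrite (Hdec EX E). lra.
    + intros y Hy. destruct (Hval' y Hy) as (x & Hx & E). exists x. split; [exact Hx|lra].
  - cut (Rs Y <= Rs X + - c); [lra|]. apply Rs_dominated.
    + intros E. pose proof E as EY. apply Hnil in EY. split; [exact EY|].
      rewrite (Hdec E EY). lra.
    + intros x Hx. destruct (Hval x Hx) as (y & Hy & E). exists y. split; [exact Hy|lra].
Qed.

(** * Numbers, sums and tilde games *)

Lemma left_opts_num c : left_opts (num c) = nil. Proof. reflexivity. Qed.
Lemma right_opts_num c : right_opts (num c) = nil. Proof. reflexivity. Qed.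
Lemma left_dec_num c : left_dec (num c) = c. Proof. reflexivity. Qed.
Lemma right_dec_num c : right_dec (num c) = c. Proof. reflexivity. Qed.
Lemma Ls_num c : Ls (num c) = c. Proof. reflexivity. Qed.
Lemma Rs_num c : Rs (num c) = c. Proof. reflexivity. Qed.

Lemma isnum_num c : isnum (num c) = true.
Proof. cbn. destruct (Req_EM_T c c); [reflexivity|contradiction]. Qed.

Lemma left_opts_gadd X Y :
  left_opts (gadd X Y) = map (fun g => gadd g Y) (left_opts X) ++ map (fun h => gadd X h) (left_opts Y).
Proof. destruct X, Y; reflexivity. Qed.

Lemma right_opts_gadd X Y :
  right_opts (gadd X Y) = map (fun g => gadd g Y) (right_opts X) ++ map (fun h => gadd X h) (right_opts Y).
Proof. destruct X, Y; reflexivity. Qed.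

Lemma left_dec_gadd X Y : left_dec (gadd X Y) = left_dec X + left_dec Y.
Proof. destruct X, Y; reflexivity. Qed.

Lemma right_dec_gadd X Y : right_dec (gadd X Y) = right_dec X + right_dec Y.
Proof. destruct X, Y; reflexivity. Qed.

Lemma left_opts_gadd_nil X Y :
  left_opts (gadd X Y) = nil <-> left_opts X = nil /\ left_opts Y = nil.
Proof.
  rewrite left_opts_gadd. split.
  - intros E. apply app_eq_nil in E as [E1 E2]. split; eapply map_eq_nil; eassumption.
  - intros [-> ->]. reflexivity.
Qed.

Lemma right_opts_gadd_nil X Y :
  right_opts (gadd X Y) = nil <-> right_opts X = nil /\ right_opts Y = nil.
Proof.
  rewrite right_opts_gadd. split.
  - intros E. apply app_eq_nil in E as [E1 E2]. split; eapply map_eq_nil; eassumption.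
  - intros [-> ->]. reflexivity.
Qed.

Lemma in_left_opts_gadd X Y y :
  In y (left_opts (gadd X Y)) <->
  (exists x, In x (left_opts X) /\ y = gadd x Y) \/ (exists z, In z (left_opts Y) /\ y = gadd X z).
Proof.
  rewrite left_opts_gadd, in_app_iff, !in_map_iff.
  split; intros [(x & E & Hx)|(x & E & Hx)]; [left|right|left|right]; exists x; auto.
Qed.

Lemma in_right_opts_gadd X Y y :
  In y (right_opts (gadd X Y)) <->
  (exists x, In x (right_opts X) /\ y = gadd x Y) \/ (exists z, In z (right_opts Y) /\ y = gadd X z).
Proof.
  rewrite right_opts_gadd, in_app_iff, !in_map_iff.
  split; intros [(x & E & Hx)|(x & E & Hx)]; [left|right|left|right]; exists x; auto.
Qed.

Lemma left_opts_tilde X t :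
  left_opts (tilde X t) = map (fun g => gadd (cool g t) (num (- t))) (left_opts X).
Proof. destruct X; reflexivity. Qed.

Lemma right_opts_tilde X t :
  right_opts (tilde X t) = map (fun g => gadd (cool g t) (num t)) (right_opts X).
Proof. destruct X; reflexivity. Qed.

Lemma left_dec_tilde X t : left_dec (tilde X t) = left_dec X.
Proof. destruct X; reflexivity. Qed.

Lemma right_dec_tilde X t : right_dec (tilde X t) = right_dec X.
Proof. destruct X; reflexivity. Qed.

Lemma tilde_num c t : tilde (num c) t = num c.
Proof. reflexivity. Qed.

Lemma left_opts_tilde_nil X t : left_opts (tilde X t) = nil <-> left_opts X = nil.
Proof.
  rewrite left_opts_tilde. split; [apply map_eq_nil|intros ->; reflexivity].
Qed.

Lemma right_opts_tilde_nil X t : right_opts (tilde X t) = nil <-> right_opts X = nil.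
Proof.
  rewrite right_opts_tilde. split; [apply map_eq_nil|intros ->; reflexivity].
Qed.

Lemma in_left_opts_tilde X t y :
  In y (left_opts (tilde X t)) <-> exists x, In x (left_opts X) /\ y = gadd (cool x t) (num (- t)).
Proof.
  rewrite left_opts_tilde, in_map_iff. split; intros (x & E & Hx); exists x; auto.
Qed.

Lemma in_right_opts_tilde X t y :
  In y (right_opts (tilde X t)) <-> exists x, In x (right_opts X) /\ y = gadd (cool x t) (num t).
Proof.
  rewrite right_opts_tilde, in_map_iff. split; intros (x & E & Hx); exists x; auto.
Qed.

Lemma scores_gadd_num X c :
  Ls (gadd X (num c)) = Ls X + c /\ Rs (gadd X (num c)) = Rs X + c.
Proof.
  induction X as [X IHL IHR] using game_ind_opts. split.
  - apply Ls_ext; [intros; rewrite left_dec_gadd; reflexivity|].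
    rewrite left_opts_gadd, left_opts_num. cbn [map]. rewrite app_nil_r, map_map.
    apply map_ext_in. intros g Hg. exact (proj2 (IHL g Hg)).
  - apply Rs_ext; [intros; rewrite right_dec_gadd; reflexivity|].
    rewrite right_opts_gadd, right_opts_num. cbn [map]. rewrite app_nil_r, map_map.
    apply map_ext_in. intros g Hg. exact (proj1 (IHR g Hg)).
Qed.

Lemma Ls_gadd_num X c : Ls (gadd X (num c)) = Ls X + c.
Proof. apply scores_gadd_num. Qed.

Lemma Rs_gadd_num X c : Rs (gadd X (num c)) = Rs X + c.
Proof. apply scores_gadd_num. Qed.

Lemma scores_num_gadd c X :
  Ls (gadd (num c) X) = c + Ls X /\ Rs (gadd (num c) X) = c + Rs X.
Proof.
  induction X as [X IHL IHR] using game_ind_opts. split.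
  - rewrite Rplus_comm. apply Ls_ext; [intros; rewrite left_dec_gadd; apply Rplus_comm|].
    rewrite left_opts_gadd, left_opts_num. cbn [map app]. rewrite map_map.
    apply map_ext_in. intros g Hg. rewrite (proj2 (IHL g Hg)). apply Rplus_comm.
  - rewrite Rplus_comm. apply Rs_ext; [intros; rewrite right_dec_gadd; apply Rplus_comm|].
    rewrite right_opts_gadd, right_opts_num. cbn [map app]. rewrite map_map.
    apply map_ext_in. intros g Hg. rewrite (proj1 (IHR g Hg)). apply Rplus_comm.
Qed.

Lemma Ls_num_gadd c X : Ls (gadd (num c) X) = c + Ls X.
Proof. apply scores_num_gadd. Qed.

Lemma Rs_num_gadd c X : Rs (gadd (num c) X) = c + Rs X.
Proof. apply scores_num_gadd. Qed.

Lemma scores_gadd_shift_l X Y c :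
  Ls (gadd (gadd X (num c)) Y) = Ls (gadd X Y) + c /\
  Rs (gadd (gadd X (num c)) Y) = Rs (gadd X Y) + c.
Proof.
  revert Y. induction X as [X IHL IHR] using game_ind_opts. intros Y.
  induction Y as [Y IHYL IHYR] using game_ind_opts. split.
  - apply Ls_ext; [intros; rewrite !left_dec_gadd, left_dec_num; ring|].
    rewrite !left_opts_gadd, left_opts_num. cbn [map]. rewrite app_nil_r, !map_app, !map_map.
    f_equal; apply map_ext_in; intros g Hg; [exact (proj2 (IHL g Hg Y))|exact (proj2 (IHYL g Hg))].
  - apply Rs_ext; [intros; rewrite !right_dec_gadd, right_dec_num; ring|].
    rewrite !right_opts_gadd, right_opts_num. cbn [map]. rewrite app_nil_r, !map_app, !map_map.
    f_equal; apply map_ext_in; intros g Hg; [exact (proj1 (IHR g Hg Y))|exact (proj1 (IHYR g Hg))].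
Qed.

Lemma scores_gadd_shift_r X Y c :
  Ls (gadd X (gadd Y (num c))) = Ls (gadd X Y) + c /\
  Rs (gadd X (gadd Y (num c))) = Rs (gadd X Y) + c.
Proof.
  revert Y. induction X as [X IHL IHR] using game_ind_opts. intros Y.
  induction Y as [Y IHYL IHYR] using game_ind_opts. split.
  - apply Ls_ext; [intros; rewrite !left_dec_gadd, left_dec_num; ring|].
    rewrite !left_opts_gadd, left_opts_num. cbn [map]. rewrite app_nil_r, !map_app, !map_map.
    f_equal; apply map_ext_in; intros g Hg; [exact (proj2 (IHL g Hg Y))|exact (proj2 (IHYL g Hg))].
  - apply Rs_ext; [intros; rewrite !right_dec_gadd, right_dec_num; ring|].
    rewrite !right_opts_gadd, right_opts_num. cbn [map]. rewrite app_nil_r, !map_app, !map_map.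
    f_equal; apply map_ext_in; intros g Hg; [exact (proj1 (IHR g Hg Y))|exact (proj1 (IHYR g Hg))].
Qed.

(** * Admissible games *)

Definition admissible (X : game) : Prop :=
  dicotic X /\ nonzugzwang X /\ terminal_numbers X.

Lemma fold_and_In (P : game -> Prop) l :
  fold_right (fun g acc => P g /\ acc) True l <-> (forall g, In g l -> P g).
Proof.
  induction l as [|x l IH]; simpl.
  - split; [intros _ g []|auto].
  - rewrite IH. split; [intros [Hx Hl] g [<-|Hg]; auto|intros H; auto].
Qed.

Lemma hered_iff P X :
  hered P X <-> P X /\ (forall g, In g (left_opts X) -> hered P g) /\
                (forall g, In g (right_opts X) -> hered P g).
Proof. destruct X. simpl hered. rewrite !fold_and_In. reflexivity. Qed.

Lemma admissible_iff X :
  admissible X <->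
  (left_opts X = nil <-> right_opts X = nil) /\
  (left_opts X = nil -> right_opts X = nil -> left_dec X = right_dec X) /\
  Rs X <= Ls X /\
  (forall g, In g (left_opts X) -> admissible g) /\
  (forall g, In g (right_opts X) -> admissible g).
Proof.
  unfold admissible at 1, dicotic at 1, nonzugzwang at 1, terminal_numbers at 1. rewrite !hered_iff.
  destruct X as [a L b Rl]. simpl. split.
  - intros ((D & DL & DR) & (N & NL & NR) & (T & TL & TR)).
    split; [exact D|split; [exact T|split; [lra|]]].
    split; intros g Hg; (split; [|split]);
      first [exact (DL g Hg) | exact (NL g Hg) | exact (TL g Hg)
            | exact (DR g Hg) | exact (NR g Hg) | exact (TR g Hg)].
  - intros (D & T & N & HL & HR).
    split; [|split]; (split; [first [exact D | lra | exact T]|split]); intros g Hg;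
      first [apply (HL g Hg) | apply (HR g Hg)].
Qed.

Lemma admissible_left_opt X g : admissible X -> In g (left_opts X) -> admissible g.
Proof. intros HX. apply admissible_iff in HX. apply HX. Qed.

Lemma admissible_right_opt X g : admissible X -> In g (right_opts X) -> admissible g.
Proof. intros HX. apply admissible_iff in HX. apply HX. Qed.

Lemma Rs_le_Ls X : admissible X -> Rs X <= Ls X.
Proof. intros HX. apply admissible_iff in HX. apply HX. Qed.

Lemma admissible_num c : admissible (num c).
Proof.
  apply admissible_iff. simpl. repeat split; auto; try lra; intros g [].
Qed.

Lemma admissible_cases X : admissible X ->
  (exists a, X = num a) \/
  (left_opts X <> nil /\ right_opts X <> nil /\ isnum X = false).
Proof.
  intros (D & T & _)%admissible_iff.
  destruct X as [a [|l L] b [|r Rl]]; simpl in D, T.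
  - left. exists a. rewrite <- (T eq_refl eq_refl). reflexivity.
  - exfalso. discriminate (proj1 D eq_refl).
  - exfalso. discriminate (proj2 D eq_refl).
  - right. split; [|split]; [discriminate|discriminate|reflexivity].
Qed.

Lemma gadd_upper_bounds A B : admissible A -> admissible B ->
  Ls (gadd A B) <= Ls A + Ls B /\
  Rs (gadd A B) <= Rs A + Ls B /\
  Rs (gadd A B) <= Ls A + Rs B.
Proof.
  revert B. induction A as [A IHL IHR] using game_ind_opts. intros B.
  induction B as [B IHBL IHBR] using game_ind_opts. intros HA HB.
  split; [|split].
  - apply Ls_le.
    + intros [EA EB]%left_opts_gadd_nil.
      rewrite left_dec_gadd, (Ls_no_opts A EA), (Ls_no_opts B EB). lra.
    + intros y [(x & Hx & ->)|(z & Hz & ->)]%in_left_opts_gadd.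
      * destruct (IHL x Hx B (admissible_left_opt A x HA Hx) HB) as (_ & Hb & _).
        pose proof (Ls_ge_opt A x Hx). lra.
      * destruct (IHBL z Hz HA (admissible_left_opt B z HB Hz)) as (_ & _ & Hb).
        pose proof (Ls_ge_opt B z Hz). lra.
  - destruct (admissible_cases A HA) as [[a ->]|(_ & HAR & _)].
    + rewrite Rs_num_gadd, Rs_num. pose proof (Rs_le_Ls B HB). lra.
    + destruct (Rs_attained A HAR) as (r & Hr & ->).
      destruct (IHR r Hr B (admissible_right_opt A r HA Hr) HB) as (Hb & _ & _).
      assert (Rs (gadd A B) <= Ls (gadd r B)).
      { apply Rs_le_opt, in_right_opts_gadd. left. exists r. auto. }
      lra.
  - destruct (admissible_cases B HB) as [[b ->]|(_ & HBR & _)].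
    + rewrite Rs_gadd_num, Rs_num. pose proof (Rs_le_Ls A HA). lra.
    + destruct (Rs_attained B HBR) as (r & Hr & ->).
      destruct (IHBR r Hr HA (admissible_right_opt B r HB Hr)) as (Hb & _ & _).
      assert (Rs (gadd A B) <= Ls (gadd A r)).
      { apply Rs_le_opt, in_right_opts_gadd. right. exists r. auto. }
      lra.
Qed.

Lemma gadd_lower_bounds A B : admissible A -> admissible B ->
  Rs A + Rs B <= Rs (gadd A B) /\
  Ls A + Rs B <= Ls (gadd A B) /\
  Rs A + Ls B <= Ls (gadd A B).
Proof.
  revert B. induction A as [A IHL IHR] using game_ind_opts. intros B.
  induction B as [B IHBL IHBR] using game_ind_opts. intros HA HB.
  split; [|split].
  - apply Rs_ge.
    + intros [EA EB]%right_opts_gadd_nil.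
      rewrite right_dec_gadd, (Rs_no_opts A EA), (Rs_no_opts B EB). lra.
    + intros y [(x & Hx & ->)|(z & Hz & ->)]%in_right_opts_gadd.
      * destruct (IHR x Hx B (admissible_right_opt A x HA Hx) HB) as (_ & Hb & _).
        pose proof (Rs_le_opt A x Hx). lra.
      * destruct (IHBR z Hz HA (admissible_right_opt B z HB Hz)) as (_ & _ & Hb).
        pose proof (Rs_le_opt B z Hz). lra.
  - destruct (admissible_cases A HA) as [[a ->]|(HAL & _ & _)].
    + rewrite Ls_num_gadd, Ls_num. pose proof (Rs_le_Ls B HB). lra.
    + destruct (Ls_attained A HAL) as (l & Hl & ->).
      destruct (IHL l Hl B (admissible_left_opt A l HA Hl) HB) as (Hb & _ & _).
      assert (Rs (gadd l B) <= Ls (gadd A B)).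
      { apply Ls_ge_opt, in_left_opts_gadd. left. exists l. auto. }
      lra.
  - destruct (admissible_cases B HB) as [[b ->]|(HBL & _ & _)].
    + rewrite Ls_gadd_num, Ls_num. pose proof (Rs_le_Ls A HA). lra.
    + destruct (Ls_attained B HBL) as (l & Hl & ->).
      destruct (IHBL l Hl HA (admissible_left_opt B l HB Hl)) as (Hb & _ & _).
      assert (Rs (gadd A l) <= Ls (gadd A B)).
      { apply Ls_ge_opt, in_left_opts_gadd. right. exists l. auto. }
      lra.
Qed.

Lemma admissible_gadd A B : admissible A -> admissible B -> admissible (gadd A B).
Proof.
  revert B. induction A as [A IHL IHR] using game_ind_opts. intros B.
  induction B as [B IHBL IHBR] using game_ind_opts. intros HA HB.
  pose proof HA as (DA & TA & _)%admissible_iff.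
  pose proof HB as (DB & TB & _)%admissible_iff.
  apply admissible_iff. split; [|split; [|split; [|split]]].
  - rewrite left_opts_gadd_nil, right_opts_gadd_nil. tauto.
  - rewrite left_opts_gadd_nil, right_opts_gadd_nil, left_dec_gadd, right_dec_gadd.
    intros [EA EB] [FA FB]. rewrite (TA EA FA), (TB EB FB). reflexivity.
  - pose proof (gadd_upper_bounds A B HA HB) as (_ & Hup & _).
    pose proof (gadd_lower_bounds A B HA HB) as (_ & _ & Hlow). lra.
  - intros y [(x & Hx & ->)|(z & Hz & ->)]%in_left_opts_gadd.
    + apply IHL; [exact Hx|apply (admissible_left_opt A x HA Hx)|exact HB].
    + apply IHBL; [exact Hz|exact HA|apply (admissible_left_opt B z HB Hz)].
  - intros y [(x & Hx & ->)|(z & Hz & ->)]%in_right_opts_gadd.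
    + apply IHR; [exact Hx|apply (admissible_right_opt A x HA Hx)|exact HB].
    + apply IHBR; [exact Hz|exact HA|apply (admissible_right_opt B z HB Hz)].
Qed.

Definition settled (X : game) (v : R) : Prop := Ls X = v /\ Rs X = v.

Lemma settled_gadd A B u v : admissible A -> admissible B ->
  settled A u -> settled B v -> settled (gadd A B) (u + v).
Proof.
  intros HA HB [LA RA] [LB RB].
  pose proof (gadd_upper_bounds A B HA HB) as (Hup & _).
  pose proof (gadd_lower_bounds A B HA HB) as (Hlow & _).
  pose proof (Rs_le_Ls (gadd A B) (admissible_gadd A B HA HB)).
  split; lra.
Qed.

(** * Cooling *)

Lemma least_root (f : R -> R) (k : R) :
  0 < k -> 0 <= f 0 ->
  (forall s t, 0 <= s -> s <= t -> f t <= f s <= f t + k * (t - s)) ->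
  (exists K, 0 <= K /\ f K <= 0) ->
  exists t0, 0 <= t0 /\ f t0 = 0 /\ (forall t, 0 <= t -> f t = 0 -> t0 <= t).
Proof.
  intros Hk Hf0 Hf (K & HK & HfK).
  destruct (Req_dec (f 0) 0) as [E0|E0].
  { exists 0. split; [lra|split; [exact E0|intros; lra]]. }
  (* the least root is the supremum of the set where f is still positive *)
  set (E := fun t => 0 <= t /\ 0 < f t).
  assert (Hbound : bound E).
  { exists K. intros t [Ht Hft]. apply Rnot_lt_le. intros HKt.
    destruct (Hf K t HK (Rlt_le _ _ HKt)). lra. }
  destruct (completeness E Hbound) as (m & Hub & Hlub); [exists 0; split; lra|].
  assert (Hm : 0 <= m) by (apply Hub; split; lra).
  assert (Hle : f m <= 0).
  { apply Rnot_lt_le. intros Hpos.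
    set (t := m + f m / (2 * k)).
    assert (Hkt : k * (t - m) = f m / 2) by (unfold t; field; lra).
    assert (Hmt : m < t) by (unfold t; pose proof (Rdiv_lt_0_compat (f m) (2 * k)); lra).
    destruct (Hf m t Hm (Rlt_le _ _ Hmt)) as [_ Hft].
    assert (Et : E t) by (split; lra).
    pose proof (Hub t Et). lra. }
  assert (Hge : 0 <= f m).
  { apply Rnot_lt_le. intros Hneg.
    set (eps := - f m / (2 * k)).
    assert (Hkeps : k * eps = - f m / 2) by (unfold eps; field; lra).
    assert (Heps : 0 < eps) by (unfold eps; apply Rdiv_lt_0_compat; lra).
    destruct (classic (exists e, E e /\ m - eps < e)) as [(e & [He Hfe] & Hlt)|Hnone].
    - assert (Hem : e <= m) by (apply Hub; split; assumption).
      destruct (Hf e m He Hem) as [_ Hfm].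
      assert (k * (m - e) < k * eps) by (apply Rmult_lt_compat_l; lra).
      lra.
    - assert (m <= m - eps); [|lra].
      apply Hlub. intros e He. apply Rnot_lt_le. intros Hlt. apply Hnone. eauto. }
  exists m. split; [exact Hm|split; [lra|]].
  intros t Ht Hft. apply Hlub. intros e [He Hfe]. apply Rnot_lt_le. intros Hte.
  destruct (Hf t e Ht (Rlt_le _ _ Hte)). lra.
Qed.

Definition squeezing (f : R -> game) : Prop :=
  forall s t, 0 <= s -> s <= t ->
    (Ls (f t) <= Ls (f s) <= Ls (f t) + (t - s)) /\
    (Rs (f s) <= Rs (f t) <= Rs (f s) + (t - s)).

Definition mast (X : game) : R := Ls (tilde X (temperature X)).

Lemma cool_unfold X t : cool X t =
  if isnum X then X
  else if Rle_dec t (tmin (tilde X)) then tilde X t else num (Ls (tilde X (tmin (tilde X)))).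
Proof. destruct X as [a L b Rl]. unfold cool; fold cool. destruct (isnum _); reflexivity. Qed.

Lemma Ls_tilde_le X s t d : 0 <= d ->
  (forall x, In x (left_opts X) -> Rs (cool x s) - s <= Rs (cool x t) - t + d) ->
  Ls (tilde X s) <= Ls (tilde X t) + d.
Proof.
  intros Hd Hopt. apply Ls_dominated.
  - intros E%left_opts_tilde_nil. split; [apply left_opts_tilde_nil, E|].
    rewrite !left_dec_tilde. lra.
  - intros y (x & Hx & ->)%in_left_opts_tilde.
    exists (gadd (cool x t) (num (- t))). split; [apply in_left_opts_tilde; eauto|].
    rewrite !Rs_gadd_num. specialize (Hopt x Hx). lra.
Qed.

Lemma Rs_tilde_le X s t d : 0 <= d ->
  (forall x, In x (right_opts X) -> Ls (cool x t) + t <= Ls (cool x s) + s + d) ->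
  Rs (tilde X t) <= Rs (tilde X s) + d.
Proof.
  intros Hd Hopt. apply Rs_dominated.
  - intros E%right_opts_tilde_nil. split; [apply right_opts_tilde_nil, E|].
    rewrite !right_dec_tilde. lra.
  - intros y (x & Hx & ->)%in_right_opts_tilde.
    exists (gadd (cool x t) (num t)). split; [apply in_right_opts_tilde; eauto|].
    rewrite !Ls_gadd_num. exact (Hopt x Hx).
Qed.

Lemma Rs_cool_lopt_le X x t : In x (left_opts X) -> Rs (cool x t) - t <= Ls (tilde X t).
Proof.
  intros Hx.
  assert (Hin : In (gadd (cool x t) (num (- t))) (left_opts (tilde X t)))
    by (apply in_left_opts_tilde; eauto).
  apply Ls_ge_opt in Hin. rewrite Rs_gadd_num in Hin. lra.
Qed.

Lemma Rs_tilde_le_Ls_cool X x t : In x (right_opts X) -> Rs (tilde X t) <= Ls (cool x t) + t.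
Proof.
  intros Hx.
  assert (Hin : In (gadd (cool x t) (num t)) (right_opts (tilde X t)))
    by (apply in_right_opts_tilde; eauto).
  apply Rs_le_opt in Hin. rewrite Ls_gadd_num in Hin. exact Hin.
Qed.

Record cooling_facts (X : game) : Prop := {
  cf_temperature : is_tmin (tilde X) (temperature X);
  cf_cool_eq : forall t, cool X t = if Rle_dec t (temperature X) then tilde X t else num (mast X);
  cf_squeezing_tilde : squeezing (tilde X);
  cf_squeezing_cool : squeezing (cool X);
  cf_admissible_cool : forall t, 0 <= t -> admissible (cool X t);
  cf_Ls_cool_0 : Ls (cool X 0) = Ls X;
  cf_Rs_cool_0 : Rs (cool X 0) = Rs X }.

Section CoolingStep.

Variable X : game.
Hypothesis HX : admissible X.
Hypothesis HL : forall g, In g (left_opts X) -> cooling_facts g.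
Hypothesis HR : forall g, In g (right_opts X) -> cooling_facts g.

Lemma step_squeezing_tilde : squeezing (tilde X).
Proof.
  intros s t Hs Hst.
  assert (HLs : forall g, In g (left_opts X) -> Rs (cool g s) <= Rs (cool g t) <= Rs (cool g s) + (t - s))
    by (intros g Hg; apply (cf_squeezing_cool g (HL g Hg) s t Hs Hst)).
  assert (HRs : forall g, In g (right_opts X) -> Ls (cool g t) <= Ls (cool g s) <= Ls (cool g t) + (t - s))
    by (intros g Hg; apply (cf_squeezing_cool g (HR g Hg) s t Hs Hst)).
  split; split.
  - cut (Ls (tilde X t) <= Ls (tilde X s) + 0); [lra|].
    apply Ls_tilde_le; [lra|]. intros x Hx. specialize (HLs x Hx). lra.
  - apply Ls_tilde_le; [lra|]. intros x Hx. specialize (HLs x Hx). lra.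
  - cut (Rs (tilde X s) <= Rs (tilde X t) + 0); [lra|].
    apply Rs_tilde_le; [lra|]. intros x Hx. specialize (HRs x Hx). lra.
  - apply Rs_tilde_le; [lra|]. intros x Hx. specialize (HRs x Hx). lra.
Qed.

Lemma step_scores_tilde_0 : Ls (tilde X 0) = Ls X /\ Rs (tilde X 0) = Rs X.
Proof.
  split.
  - transitivity (Ls X + 0); [|ring]. apply Ls_ext.
    + intros _ _. rewrite left_dec_tilde. ring.
    + rewrite left_opts_tilde, map_map. apply map_ext_in. intros g Hg.
      rewrite Rs_gadd_num, (cf_Rs_cool_0 g (HL g Hg)). ring.
  - transitivity (Rs X + 0); [|ring]. apply Rs_ext.
    + intros _ _. rewrite right_dec_tilde. ring.
    + rewrite right_opts_tilde, map_map. apply map_ext_in. intros g Hg.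
      rewrite Ls_gadd_num, (cf_Ls_cool_0 g (HR g Hg)). ring.
Qed.

(* Cooled options never rise above their left score nor fall below their right
   score, so the shifts by -t and +t force Ls(~X_t) - Rs(~X_t) <= KL + KR - 2t. *)
Lemma step_tilde_balances :
  left_opts X <> nil -> right_opts X <> nil -> exists t0, is_tmin (tilde X) t0.
Proof.
  intros HXL HXR.
  destruct (list_upper_bound Ls (left_opts X)) as [KL HKL].
  destruct (list_upper_bound (fun g => - Rs g) (right_opts X)) as [KR HKR].
  assert (HLs : forall t, 0 <= t -> Ls (tilde X t) <= KL - t).
  { intros t Ht. apply Ls_le; [intros E%left_opts_tilde_nil; contradiction|].
    intros y (x & Hx & ->)%in_left_opts_tilde. rewrite Rs_gadd_num.
    pose proof (Rs_le_Ls _ (cf_admissible_cool x (HL x Hx) t Ht)).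
    destruct (cf_squeezing_cool x (HL x Hx) 0 t (Rle_refl 0) Ht) as [[Hmono _] _].
    rewrite (cf_Ls_cool_0 x (HL x Hx)) in Hmono. specialize (HKL x Hx). lra. }
  assert (HRs : forall t, 0 <= t -> - KR + t <= Rs (tilde X t)).
  { intros t Ht. apply Rs_ge; [intros E%right_opts_tilde_nil; contradiction|].
    intros y (x & Hx & ->)%in_right_opts_tilde. rewrite Ls_gadd_num.
    pose proof (Rs_le_Ls _ (cf_admissible_cool x (HR x Hx) t Ht)).
    destruct (cf_squeezing_cool x (HR x Hx) 0 t (Rle_refl 0) Ht) as [_ [Hmono _]].
    rewrite (cf_Rs_cool_0 x (HR x Hx)) in Hmono. specialize (HKR x Hx). lra. }
  destruct (least_root (fun t => Ls (tilde X t) - Rs (tilde X t)) 2) as (t0 & Ht0 & Hroot & Hmin);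
    cbv beta in *.
  - lra.
  - destruct step_scores_tilde_0 as [-> ->]. pose proof (Rs_le_Ls X HX). lra.
  - intros s t Hs Hst. destruct (step_squeezing_tilde s t Hs Hst) as [[? ?] [? ?]]. lra.
  - exists (Rabs KL + Rabs KR). pose proof (Rle_abs KL). pose proof (Rle_abs KR).
    pose proof (Rabs_pos KL). pose proof (Rabs_pos KR).
    split; [lra|]. specialize (HLs (Rabs KL + Rabs KR) ltac:(lra)).
    specialize (HRs (Rabs KL + Rabs KR) ltac:(lra)). lra.
  - exists t0. split; [exact Ht0|split; [lra|]].
    intros t Ht Et. apply Hmin; [exact Ht|lra].
Qed.

Lemma step_temperature : is_tmin (tilde X) (temperature X).
Proof.
  unfold temperature. destruct (admissible_cases X HX) as [[a ->]|(HXL & HXR & Hn)].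
  - rewrite isnum_num. split; [lra|split; [reflexivity|intros; lra]].
  - rewrite Hn. unfold tmin. apply epsilon_spec, step_tilde_balances; assumption.
Qed.

Lemma step_cool_eq t :
  cool X t = if Rle_dec t (temperature X) then tilde X t else num (mast X).
Proof.
  unfold mast, temperature. rewrite cool_unfold.
  destruct (admissible_cases X HX) as [[a ->]|(_ & _ & Hn)].
  - rewrite isnum_num, !tilde_num. destruct (Rle_dec t 0); reflexivity.
  - rewrite Hn. reflexivity.
Qed.

Lemma step_scores_cool t :
  Ls (cool X t) = Ls (tilde X (Rmin t (temperature X))) /\
  Rs (cool X t) = Rs (tilde X (Rmin t (temperature X))).
Proof.
  rewrite step_cool_eq. destruct (Rle_dec t (temperature X)) as [Ht|Ht].
  - rewrite Rmin_left by exact Ht. split; reflexivity.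
  - rewrite Rmin_right by lra. destruct step_temperature as (_ & Hbal & _).
    unfold mast. rewrite Ls_num, Rs_num. split; [reflexivity|exact Hbal].
Qed.

Lemma step_squeezing_cool : squeezing (cool X).
Proof.
  intros s t Hs Hst.
  destruct (step_scores_cool s) as [-> ->]. destruct (step_scores_cool t) as [-> ->].
  destruct step_temperature as (Hsig & _ & _).
  set (s' := Rmin s (temperature X)). set (t' := Rmin t (temperature X)).
  assert (Hst' : 0 <= s' <= t' /\ t' - s' <= t - s).
  { unfold s', t', Rmin. destruct (Rle_dec s _); destruct (Rle_dec t _); lra. }
  destruct (step_squeezing_tilde s' t' ltac:(lra) ltac:(lra)) as [[? ?] [? ?]].
  split; split; lra.
Qed.

Lemma step_admissible_cool t : 0 <= t -> admissible (cool X t).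
Proof.
  intros Ht. rewrite step_cool_eq.
  destruct (Rle_dec t (temperature X)) as [Hle|_]; [|apply admissible_num].
  pose proof HX as (DX & TX & _)%admissible_iff.
  destruct step_temperature as (_ & Hbal & _).
  destruct (step_squeezing_tilde t (temperature X) Ht Hle) as [[HLs _] [HRs _]].
  apply admissible_iff. split; [|split; [|split; [|split]]].
  - rewrite left_opts_tilde_nil, right_opts_tilde_nil. exact DX.
  - rewrite left_opts_tilde_nil, right_opts_tilde_nil, left_dec_tilde, right_dec_tilde. exact TX.
  - lra.
  - intros y (x & Hx & ->)%in_left_opts_tilde.
    apply admissible_gadd; [exact (cf_admissible_cool x (HL x Hx) t Ht)|apply admissible_num].
  - intros y (x & Hx & ->)%in_right_opts_tilde.
    apply admissible_gadd; [exact (cf_admissible_cool x (HR x Hx) t Ht)|apply admissible_num].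
Qed.

Lemma step_cooling_facts : cooling_facts X.
Proof.
  destruct step_temperature as (Hsig & _ & _).
  assert (H0 : cool X 0 = tilde X 0).
  { rewrite step_cool_eq. destruct (Rle_dec 0 (temperature X)); [reflexivity|lra]. }
  constructor.
  - exact step_temperature.
  - exact step_cool_eq.
  - exact step_squeezing_tilde.
  - exact step_squeezing_cool.
  - exact step_admissible_cool.
  - rewrite H0. apply step_scores_tilde_0.
  - rewrite H0. apply step_scores_tilde_0.
Qed.

End CoolingStep.

Lemma cooling X : admissible X -> cooling_facts X.
Proof.
  induction X as [X IHL IHR] using game_ind_opts. intros HX.
  apply step_cooling_facts; [exact HX| |]; intros g Hg.
  - exact (IHL g Hg (admissible_left_opt X g HX Hg)).
  - exact (IHR g Hg (admissible_right_opt X g HX Hg)).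
Qed.

Lemma temperature_is_tmin X : admissible X -> is_tmin (tilde X) (temperature X).
Proof. intros HX. exact (cf_temperature X (cooling X HX)). Qed.

Lemma temperature_nonneg X : admissible X -> 0 <= temperature X.
Proof. intros HX. apply temperature_is_tmin, HX. Qed.

Lemma squeezing_tilde X : admissible X -> squeezing (tilde X).
Proof. intros HX. exact (cf_squeezing_tilde X (cooling X HX)). Qed.

Lemma admissible_cool X t : admissible X -> 0 <= t -> admissible (cool X t).
Proof. intros HX. exact (cf_admissible_cool X (cooling X HX) t). Qed.

Lemma cool_hot X t : admissible X -> t <= temperature X -> cool X t = tilde X t.
Proof.
  intros HX Ht. rewrite (cf_cool_eq X (cooling X HX)).
  destruct (Rle_dec t (temperature X)); [reflexivity|contradiction].
Qed.

Lemma cool_frozen X t : admissible X -> temperature X < t -> cool X t = num (mast X).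
Proof.
  intros HX Ht. rewrite (cf_cool_eq X (cooling X HX)).
  destruct (Rle_dec t (temperature X)); [lra|reflexivity].
Qed.

Lemma settled_tilde_temperature X : admissible X -> settled (tilde X (temperature X)) (mast X).
Proof.
  intros HX. destruct (temperature_is_tmin X HX) as (_ & Hbal & _).
  split; [reflexivity|symmetry; exact Hbal].
Qed.

Lemma settled_cool_frozen X t : admissible X -> temperature X <= t -> settled (cool X t) (mast X).
Proof.
  intros HX Ht. destruct (Rle_lt_or_eq_dec _ _ Ht) as [Hlt|<-].
  - rewrite (cool_frozen X t HX Hlt). split; reflexivity.
  - rewrite (cool_hot X _ HX (Rle_refl _)). apply settled_tilde_temperature, HX.
Qed.

Lemma hot_has_opts X : admissible X -> 0 < temperature X ->
  left_opts X <> nil /\ right_opts X <> nil.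
Proof.
  intros HX Hpos. destruct (admissible_cases X HX) as [[a ->]|(HXL & HXR & _)].
  - unfold temperature in Hpos. rewrite isnum_num in Hpos. lra.
  - split; assumption.
Qed.

Lemma Rs_cool_lopt_le_mast X x t : admissible X -> temperature X <= t ->
  In x (left_opts X) -> Rs (cool x t) - t <= mast X.
Proof.
  intros HX Ht Hx. pose proof (Rs_cool_lopt_le X x t Hx).
  destruct (squeezing_tilde X HX (temperature X) t (temperature_nonneg X HX) Ht) as [[? _] _].
  unfold mast. lra.
Qed.

Lemma mast_le_Ls_cool_ropt X x t : admissible X -> temperature X <= t ->
  In x (right_opts X) -> mast X <= Ls (cool x t) + t.
Proof.
  intros HX Ht Hx. pose proof (Rs_tilde_le_Ls_cool X x t Hx).
  destruct (squeezing_tilde X HX (temperature X) t (temperature_nonneg X HX) Ht) as [_ [? _]].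
  destruct (settled_tilde_temperature X HX) as [_ Hbal]. lra.
Qed.

(** * Cooling a sum *)

Definition same_scores (X Y : game) : Prop := Ls X = Ls Y /\ Rs X = Rs Y.

Definition cool_additive (G H : game) : Prop :=
  forall t, 0 <= t -> same_scores (cool (gadd G H) t) (gadd (cool G t) (cool H t)).

Definition tilde_additive (G H : game) : Prop :=
  forall t, 0 <= t -> t <= Rmax (temperature G) (temperature H) ->
    same_scores (tilde (gadd G H) t) (gadd (cool G t) (cool H t)).

Section TildeAdditiveStep.

Variables G H : game.
Hypotheses (HG : admissible G) (HH : admissible H).
Hypothesis IHG : forall x, In x (left_opts G) \/ In x (right_opts G) -> cool_additive x H.
Hypothesis IHH : forall z, In z (left_opts H) \/ In z (right_opts H) -> cool_additive G z.

Lemma tilde_additive_hot t : 0 <= t -> t <= temperature G -> t <= temperature H ->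
  same_scores (tilde (gadd G H) t) (gadd (cool G t) (cool H t)).
Proof.
  intros Ht HtG HtH.
  pose proof (cool_hot G t HG HtG) as EG. pose proof (cool_hot H t HH HtH) as EH.
  rewrite EG, EH. split.
  - transitivity (Ls (gadd (tilde G t) (tilde H t)) + 0); [|ring]. apply Ls_ext.
    + intros _ _. rewrite left_dec_tilde, !left_dec_gadd, !left_dec_tilde. ring.
    + rewrite left_opts_tilde, !left_opts_gadd, !left_opts_tilde, !map_app, !map_map.
      f_equal; apply map_ext_in; intros y Hy; rewrite Rs_gadd_num.
      * rewrite (proj2 (IHG y (or_introl Hy) t Ht)), EH, (proj2 (scores_gadd_shift_l _ _ _)). ring.
      * rewrite (proj2 (IHH y (or_introl Hy) t Ht)), EG, (proj2 (scores_gadd_shift_r _ _ _)). ring.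
  - transitivity (Rs (gadd (tilde G t) (tilde H t)) + 0); [|ring]. apply Rs_ext.
    + intros _ _. rewrite right_dec_tilde, !right_dec_gadd, !right_dec_tilde. ring.
    + rewrite right_opts_tilde, !right_opts_gadd, !right_opts_tilde, !map_app, !map_map.
      f_equal; apply map_ext_in; intros y Hy; rewrite Ls_gadd_num.
      * rewrite (proj1 (IHG y (or_intror Hy) t Ht)), EH, (proj1 (scores_gadd_shift_l _ _ _)). ring.
      * rewrite (proj1 (IHH y (or_intror Hy) t Ht)), EG, (proj1 (scores_gadd_shift_r _ _ _)). ring.
Qed.

Section GFrozen.

Variable t : R.
Hypotheses (Ht : 0 <= t) (HtG : temperature G < t) (HtH : t <= temperature H).

Let EG : cool G t = num (mast G) := cool_frozen G t HG HtG.
Let EH : cool H t = tilde H t := cool_hot H t HH HtH.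

Lemma Ls_tilde_gadd_G_frozen : Ls (tilde (gadd G H) t) = Ls (gadd (cool G t) (cool H t)).
Proof.
  rewrite EG, Ls_num_gadd, EH.
  destruct (hot_has_opts H HH) as [HHL _]; [pose proof (temperature_nonneg G HG); lra|].
  apply Rle_antisym.
  - apply Ls_le; [intros [_ E]%left_opts_tilde_nil%left_opts_gadd_nil; contradiction|].
    intros y (y' & Hy' & ->)%in_left_opts_tilde. rewrite Rs_gadd_num.
    apply in_left_opts_gadd in Hy' as [(x & Hx & ->)|(z & Hz & ->)].
    + rewrite (proj2 (IHG x (or_introl Hx) t Ht)), EH.
      pose proof (admissible_cool x t (admissible_left_opt G x HG Hx) Ht) as Hxt.
      pose proof (admissible_cool H t HH Ht) as HHt. rewrite EH in HHt.
      destruct (gadd_upper_bounds _ _ Hxt HHt) as (_ & Hb & _).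
      pose proof (Rs_cool_lopt_le_mast G x t HG (Rlt_le _ _ HtG) Hx). lra.
    + rewrite (proj2 (IHH z (or_introl Hz) t Ht)), EG, Rs_num_gadd.
      pose proof (Rs_cool_lopt_le H z t Hz). lra.
  - destruct (Ls_attained (tilde H t)) as (y & Hy & ->); [rewrite left_opts_tilde_nil; exact HHL|].
    apply in_left_opts_tilde in Hy as (z & Hz & ->). rewrite Rs_gadd_num.
    assert (Hin : In (gadd (cool (gadd G z) t) (num (- t))) (left_opts (tilde (gadd G H) t))).
    { apply in_left_opts_tilde. exists (gadd G z).
      split; [apply in_left_opts_gadd; right; eauto|reflexivity]. }
    apply Ls_ge_opt in Hin.
    rewrite Rs_gadd_num, (proj2 (IHH z (or_introl Hz) t Ht)), EG, Rs_num_gadd in Hin. lra.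
Qed.

Lemma Rs_tilde_gadd_G_frozen : Rs (tilde (gadd G H) t) = Rs (gadd (cool G t) (cool H t)).
Proof.
  rewrite EG, Rs_num_gadd, EH.
  destruct (hot_has_opts H HH) as [_ HHR]; [pose proof (temperature_nonneg G HG); lra|].
  apply Rle_antisym.
  - destruct (Rs_attained (tilde H t)) as (y & Hy & ->); [rewrite right_opts_tilde_nil; exact HHR|].
    apply in_right_opts_tilde in Hy as (z & Hz & ->). rewrite Ls_gadd_num.
    assert (Hin : In (gadd (cool (gadd G z) t) (num t)) (right_opts (tilde (gadd G H) t))).
    { apply in_right_opts_tilde. exists (gadd G z).
      split; [apply in_right_opts_gadd; right; eauto|reflexivity]. }
    apply Rs_le_opt in Hin.
    rewrite Ls_gadd_num, (proj1 (IHH z (or_intror Hz) t Ht)), EG, Ls_num_gadd in Hin. lra.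
  - apply Rs_ge; [intros [_ E]%right_opts_tilde_nil%right_opts_gadd_nil; contradiction|].
    intros y (y' & Hy' & ->)%in_right_opts_tilde. rewrite Ls_gadd_num.
    apply in_right_opts_gadd in Hy' as [(x & Hx & ->)|(z & Hz & ->)].
    + rewrite (proj1 (IHG x (or_intror Hx) t Ht)), EH.
      pose proof (admissible_cool x t (admissible_right_opt G x HG Hx) Ht) as Hxt.
      pose proof (admissible_cool H t HH Ht) as HHt. rewrite EH in HHt.
      destruct (gadd_lower_bounds _ _ Hxt HHt) as (_ & Hb & _).
      pose proof (mast_le_Ls_cool_ropt G x t HG (Rlt_le _ _ HtG) Hx). lra.
    + rewrite (proj1 (IHH z (or_intror Hz) t Ht)), EG, Ls_num_gadd.
      pose proof (Rs_tilde_le_Ls_cool H z t Hz). lra.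
Qed.

End GFrozen.

Section HFrozen.

Variable t : R.
Hypotheses (Ht : 0 <= t) (HtH : temperature H < t) (HtG : t <= temperature G).

Let EH : cool H t = num (mast H) := cool_frozen H t HH HtH.
Let EG : cool G t = tilde G t := cool_hot G t HG HtG.

Lemma Ls_tilde_gadd_H_frozen : Ls (tilde (gadd G H) t) = Ls (gadd (cool G t) (cool H t)).
Proof.
  rewrite EH, Ls_gadd_num, EG.
  destruct (hot_has_opts G HG) as [HGL _]; [pose proof (temperature_nonneg H HH); lra|].
  apply Rle_antisym.
  - apply Ls_le; [intros [E _]%left_opts_tilde_nil%left_opts_gadd_nil; contradiction|].
    intros y (y' & Hy' & ->)%in_left_opts_tilde. rewrite Rs_gadd_num.
    apply in_left_opts_gadd in Hy' as [(x & Hx & ->)|(z & Hz & ->)].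
    + rewrite (proj2 (IHG x (or_introl Hx) t Ht)), EH, Rs_gadd_num.
      pose proof (Rs_cool_lopt_le G x t Hx). lra.
    + rewrite (proj2 (IHH z (or_introl Hz) t Ht)), EG.
      pose proof (admissible_cool z t (admissible_left_opt H z HH Hz) Ht) as Hzt.
      pose proof (admissible_cool G t HG Ht) as HGt. rewrite EG in HGt.
      destruct (gadd_upper_bounds _ _ HGt Hzt) as (_ & _ & Hb).
      pose proof (Rs_cool_lopt_le_mast H z t HH (Rlt_le _ _ HtH) Hz). lra.
  - destruct (Ls_attained (tilde G t)) as (y & Hy & ->); [rewrite left_opts_tilde_nil; exact HGL|].
    apply in_left_opts_tilde in Hy as (x & Hx & ->). rewrite Rs_gadd_num.
    assert (Hin : In (gadd (cool (gadd x H) t) (num (- t))) (left_opts (tilde (gadd G H) t))).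
    { apply in_left_opts_tilde. exists (gadd x H).
      split; [apply in_left_opts_gadd; left; eauto|reflexivity]. }
    apply Ls_ge_opt in Hin.
    rewrite Rs_gadd_num, (proj2 (IHG x (or_introl Hx) t Ht)), EH, Rs_gadd_num in Hin. lra.
Qed.

Lemma Rs_tilde_gadd_H_frozen : Rs (tilde (gadd G H) t) = Rs (gadd (cool G t) (cool H t)).
Proof.
  rewrite EH, Rs_gadd_num, EG.
  destruct (hot_has_opts G HG) as [_ HGR]; [pose proof (temperature_nonneg H HH); lra|].
  apply Rle_antisym.
  - destruct (Rs_attained (tilde G t)) as (y & Hy & ->); [rewrite right_opts_tilde_nil; exact HGR|].
    apply in_right_opts_tilde in Hy as (x & Hx & ->). rewrite Ls_gadd_num.
    assert (Hin : In (gadd (cool (gadd x H) t) (num t)) (right_opts (tilde (gadd G H) t))).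
    { apply in_right_opts_tilde. exists (gadd x H).
      split; [apply in_right_opts_gadd; left; eauto|reflexivity]. }
    apply Rs_le_opt in Hin.
    rewrite Ls_gadd_num, (proj1 (IHG x (or_intror Hx) t Ht)), EH, Ls_gadd_num in Hin. lra.
  - apply Rs_ge; [intros [E _]%right_opts_tilde_nil%right_opts_gadd_nil; contradiction|].
    intros y (y' & Hy' & ->)%in_right_opts_tilde. rewrite Ls_gadd_num.
    apply in_right_opts_gadd in Hy' as [(x & Hx & ->)|(z & Hz & ->)].
    + rewrite (proj1 (IHG x (or_intror Hx) t Ht)), EH, Ls_gadd_num.
      pose proof (Rs_tilde_le_Ls_cool G x t Hx). lra.
    + rewrite (proj1 (IHH z (or_intror Hz) t Ht)), EG.
      pose proof (admissible_cool z t (admissible_right_opt H z HH Hz) Ht) as Hzt.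
      pose proof (admissible_cool G t HG Ht) as HGt. rewrite EG in HGt.
      destruct (gadd_lower_bounds _ _ HGt Hzt) as (_ & _ & Hb).
      pose proof (mast_le_Ls_cool_ropt H z t HH (Rlt_le _ _ HtH) Hz). lra.
Qed.

End HFrozen.

Lemma tilde_additive_step : tilde_additive G H.
Proof.
  intros t Ht HtM.
  destruct (Rle_dec t (temperature G)) as [HtG|HtG];
    destruct (Rle_dec t (temperature H)) as [HtH|HtH].
  - apply tilde_additive_hot; assumption.
  - split; [apply Ls_tilde_gadd_H_frozen|apply Rs_tilde_gadd_H_frozen]; lra.
  - split; [apply Ls_tilde_gadd_G_frozen|apply Rs_tilde_gadd_G_frozen]; lra.
  - apply Rmax_Rle in HtM. lra.
Qed.

End TildeAdditiveStep.

Section TildeAdditiveConsequences.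

Variables G H : game.
Hypotheses (HG : admissible G) (HH : admissible H) (HT : tilde_additive G H).

Let S := gadd G H.
Let M := Rmax (temperature G) (temperature H).

Lemma settled_sum_late t : M <= t ->
  settled (gadd (cool G t) (cool H t)) (mast G + mast H).
Proof.
  intros Ht. unfold M in Ht.
  pose proof (Rmax_l (temperature G) (temperature H)).
  pose proof (Rmax_r (temperature G) (temperature H)).
  apply settled_gadd.
  - apply admissible_cool; [exact HG|pose proof (temperature_nonneg G HG); lra].
  - apply admissible_cool; [exact HH|pose proof (temperature_nonneg H HH); lra].
  - apply settled_cool_frozen; [exact HG|lra].
  - apply settled_cool_frozen; [exact HH|lra].
Qed.

Lemma temperature_gadd_le : temperature S <= M.
Proof.
  assert (HM : 0 <= M).
  { pose proof (temperature_nonneg G HG). pose proof (Rmax_l (temperature G) (temperature H)).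
    unfold M. lra. }
  destruct (HT M HM (Rle_refl M)) as [EL ER].
  destruct (settled_sum_late M (Rle_refl M)) as [SL SR].
  apply (temperature_is_tmin S (admissible_gadd G H HG HH)); [exact HM|].
  unfold S. rewrite EL, ER, SL, SR. reflexivity.
Qed.

Lemma settled_sum_mid t : temperature S <= t <= M ->
  settled (gadd (cool G t) (cool H t)) (mast S).
Proof.
  intros [HTt HtM]. pose proof (admissible_gadd G H HG HH) as HS.
  pose proof (temperature_nonneg S HS) as HT0.
  destruct (HT t ltac:(lra) HtM) as [EL ER].
  destruct (squeezing_tilde S HS (temperature S) t HT0 HTt) as [[HLs _] [HRs _]].
  destruct (settled_tilde_temperature S HS) as [SL SR].
  assert (Hsum : admissible (gadd (cool G t) (cool H t)))
    by (apply admissible_gadd; apply admissible_cool; assumption || lra).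
  pose proof (Rs_le_Ls _ Hsum). unfold S in *. split; lra.
Qed.

Lemma mast_gadd : mast S = mast G + mast H.
Proof.
  destruct (settled_sum_mid M (conj temperature_gadd_le (Rle_refl M))) as [E _].
  destruct (settled_sum_late M (Rle_refl M)) as [E' _]. congruence.
Qed.

Lemma settled_sum t : temperature S <= t ->
  settled (gadd (cool G t) (cool H t)) (mast S).
Proof.
  intros HTt. destruct (Rle_dec t M) as [HtM|HtM].
  - apply settled_sum_mid. lra.
  - rewrite mast_gadd. apply settled_sum_late. lra.
Qed.

Lemma cool_additive_of_tilde : cool_additive G H.
Proof.
  intros t Ht. fold S. pose proof (admissible_gadd G H HG HH) as HS.
  destruct (Rle_dec t (temperature S)) as [HtT|HtT].
  - rewrite (cool_hot S t HS HtT). apply HT; [exact Ht|].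
    pose proof temperature_gadd_le as Hle. unfold M in Hle. lra.
  - rewrite (cool_frozen S t HS ltac:(lra)).
    destruct (settled_sum t ltac:(lra)) as [EL ER]. split; symmetry; assumption.
Qed.

Lemma temperature_gadd_eq : temperature H < temperature G -> temperature S = temperature G.
Proof.
  intros Hlt.
  assert (HM : M = temperature G) by (apply Rmax_left; lra).
  pose proof temperature_gadd_le as Hle.
  apply Rle_antisym; [lra|]. apply Rnot_lt_le. intros HTG.
  (* for s strictly between max(sigma(S), sigma(H)) and sigma(G), the settled
     sum G_s + H_s is ~G_s + mast H, so ~G_s would already be balanced *)
  set (s := (Rmax (temperature S) (temperature H) + temperature G) / 2).
  pose proof (Rmax_l (temperature S) (temperature H)).
  pose proof (Rmax_r (temperature S) (temperature H)).
  assert (Hs : temperature S < s /\ temperature H < s /\ s < temperature G).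
  { pose proof (Rmax_lub_lt _ _ _ HTG Hlt). unfold s. lra. }
  destruct (settled_sum s ltac:(lra)) as [EL ER].
  rewrite (cool_hot G s HG ltac:(lra)), (cool_frozen H s HH ltac:(lra)),
    Ls_gadd_num in EL.
  rewrite (cool_hot G s HG ltac:(lra)), (cool_frozen H s HH ltac:(lra)),
    Rs_gadd_num in ER.
  destruct (temperature_is_tmin G HG) as (_ & _ & Hmin).
  assert (temperature G <= s); [|lra].
  apply Hmin; [pose proof (temperature_nonneg S (admissible_gadd G H HG HH)); lra|lra].
Qed.

Lemma cool_gadd_at_temperature :
  same_scores (cool S (temperature S)) (gadd (cool G (temperature G)) (cool H (temperature H))).
Proof.
  pose proof (admissible_gadd G H HG HH) as HS.
  destruct (settled_cool_frozen S _ HS (Rle_refl _)) as [EL ER].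
  destruct (settled_gadd _ _ (mast G) (mast H)
              (admissible_cool G _ HG (temperature_nonneg G HG))
              (admissible_cool H _ HH (temperature_nonneg H HH))
              (settled_cool_frozen G _ HG (Rle_refl _))
              (settled_cool_frozen H _ HH (Rle_refl _))) as [FL FR].
  rewrite <- mast_gadd in FL, FR. split; congruence.
Qed.

End TildeAdditiveConsequences.

Lemma tilde_additive_all G H : admissible G -> admissible H -> tilde_additive G H.
Proof.
  revert H. induction G as [G IHL IHR] using game_ind_opts. intros H.
  induction H as [H IHHL IHHR] using game_ind_opts. intros HG HH.
  apply tilde_additive_step; [exact HG|exact HH| |].
  - intros x [Hx|Hx].
    + pose proof (admissible_left_opt G x HG Hx) as Hxa.
      exact (cool_additive_of_tilde x H Hxa HH (IHL x Hx H Hxa HH)).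
    + pose proof (admissible_right_opt G x HG Hx) as Hxa.
      exact (cool_additive_of_tilde x H Hxa HH (IHR x Hx H Hxa HH)).
  - intros z [Hz|Hz].
    + pose proof (admissible_left_opt H z HH Hz) as Hza.
      exact (cool_additive_of_tilde G z HG Hza (IHHL z Hz HG Hza)).
    + pose proof (admissible_right_opt H z HH Hz) as Hza.
      exact (cool_additive_of_tilde G z HG Hza (IHHR z Hz HG Hza)).
Qed.

Theorem mainTheorem3 (G H : game) :
  dicotic G -> nonzugzwang G -> terminal_numbers G ->
  dicotic H -> nonzugzwang H -> terminal_numbers H ->
  (forall t : R, 0 <= t ->
     Ls (cool (gadd G H) t) = Ls (gadd (cool G t) (cool H t)) /\
     Rs (cool (gadd G H) t) = Rs (gadd (cool G t) (cool H t))) /\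
  temperature (gadd G H) <= Rmax (temperature G) (temperature H) /\
  (temperature H < temperature G -> temperature (gadd G H) = temperature G) /\
  Ls (cool (gadd G H) (temperature (gadd G H))) =
    Ls (gadd (cool G (temperature G)) (cool H (temperature H))) /\
  Rs (cool (gadd G H) (temperature (gadd G H))) =
    Rs (gadd (cool G (temperature G)) (cool H (temperature H))).
Proof.
  intros DG NG TG DH NH TH.
  assert (HG : admissible G) by (repeat split; assumption).
  assert (HH : admissible H) by (repeat split; assumption).
  pose proof (tilde_additive_all G H HG HH) as HT.
  split; [exact (cool_additive_of_tilde G H HG HH HT)|].
  split; [exact (temperature_gadd_le G H HG HH HT)|].
  split; [exact (temperature_gadd_eq G H HG HH HT)|].
  exact (cool_gadd_at_temperature G H HG HH HT).
Qed.
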